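(* Let $\mathcal{H}$ be a complex Hilbert space and let $R,S\in\mathbb{B}(\mathcal{H})$ be invertible (with bounded inverses) such that $D(R)\le\|R^{-1}\|^{-2}$ and $D(S)\le\|S^{-1}\|^{-2}$. Then $\omega(RS)\le 2\,\omega(R)\,\omega(S)$.
   Context: $\mathbb{B}(\mathcal{H})$ denotes the bounded linear operators on $\mathcal{H}$. $\omega(A)=\sup\{|\langle Ax,x\rangle| : \|x\|=1\}$ is the numerical radius, and for $A\in\mathbb{B}(\mathcal{H})$, $D(A)=2\min(\|A_1\|^2,\|A_2\|^2)$ where $A_1=\frac{A+A^*}{2}$, $A_2=\frac{A-A^*}{2i}$. *)

From Stdlib Require Import Reals Lra ClassicalEpsilon.
Open Scope R_scope.

Record Cplx := mkC { re : R; im : R }.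
Definition C0 : Cplx := mkC 0 0.
Definition C1 : Cplx := mkC 1 0.
Definition Cadd (a b : Cplx) : Cplx := mkC (re a + re b) (im a + im b).
Definition Cmul (a b : Cplx) : Cplx :=
  mkC (re a * re b - im a * im b) (re a * im b + im a * re b).
Definition Cconj (a : Cplx) : Cplx := mkC (re a) (- im a).
Definition Cmod (a : Cplx) : R := sqrt (re a ^ 2 + im a ^ 2).
Definition RtoC (r : R) : Cplx := mkC r 0.

Record HilbertSpace := {
  hcar :> Type;
  hzero : hcar;
  hadd : hcar -> hcar -> hcar;
  hopp : hcar -> hcar;
  hscal : Cplx -> hcar -> hcar;
  hinner : hcar -> hcar -> Cplx;
  hadd_assoc : forall x y z, hadd x (hadd y z) = hadd (hadd x y) z;
  hadd_comm : forall x y, hadd x y = hadd y x;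
  hadd_0 : forall x, hadd hzero x = x;
  hadd_opp : forall x, hadd x (hopp x) = hzero;
  hscal_assoc : forall a b x, hscal a (hscal b x) = hscal (Cmul a b) x;
  hscal_1 : forall x, hscal C1 x = x;
  hscal_addr : forall a x y, hscal a (hadd x y) = hadd (hscal a x) (hscal a y);
  hscal_addl : forall a b x, hscal (Cadd a b) x = hadd (hscal a x) (hscal b x);
  hinner_addl : forall x y z, hinner (hadd x y) z = Cadd (hinner x z) (hinner y z);
  hinner_scall : forall a x y, hinner (hscal a x) y = Cmul a (hinner x y);
  hinner_sym : forall x y, hinner y x = Cconj (hinner x y);
  hinner_pos : forall x, 0 <= re (hinner x x);
  hinner_def : forall x, re (hinner x x) = 0 -> x = hzero;
  hcomplete : forall u : nat -> hcar,
    (forall eps, eps > 0 -> exists N, forall m n, (N <= m)%nat -> (N <= n)%nat ->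
        sqrt (re (hinner (hadd (u m) (hopp (u n))) (hadd (u m) (hopp (u n))))) < eps) ->
    exists l, forall eps, eps > 0 -> exists N, forall n, (N <= n)%nat ->
        sqrt (re (hinner (hadd (u n) (hopp l)) (hadd (u n) (hopp l)))) < eps
}.

Arguments hzero {h}. Arguments hadd {h}. Arguments hopp {h}.
Arguments hscal {h}. Arguments hinner {h}.

Definition hnorm {H : HilbertSpace} (x : H) : R := sqrt (re (hinner x x)).

(* supremum of a set of reals (0 if it has no least upper bound) *)
Definition Rsup (E : R -> Prop) : R :=
  match excluded_middle_informative (exists l, is_lub E l) with
  | left h => proj1_sig (constructive_indefinite_description _ h)
  | right _ => 0
  end.

Definition is_linear {H : HilbertSpace} (A : H -> H) : Prop :=
  (forall x y, A (hadd x y) = hadd (A x) (A y)) /\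
  (forall a x, A (hscal a x) = hscal a (A x)).

Definition is_bounded {H : HilbertSpace} (A : H -> H) : Prop :=
  is_linear A /\ exists M, forall x, hnorm (A x) <= M * hnorm x.

Definition is_adjoint {H : HilbertSpace} (A Astar : H -> H) : Prop :=
  forall x y, hinner (A x) y = hinner x (Astar y).

Definition is_inverse {H : HilbertSpace} (A Ainv : H -> H) : Prop :=
  is_bounded Ainv /\ (forall x, A (Ainv x) = x) /\ (forall x, Ainv (A x) = x).

Definition opnorm {H : HilbertSpace} (A : H -> H) : R :=
  Rsup (fun r => exists x : H, hnorm x <= 1 /\ r = hnorm (A x)).

Definition numrad {H : HilbertSpace} (A : H -> H) : R :=
  Rsup (fun r => exists x : H, hnorm x = 1 /\ r = Cmod (hinner (A x) x)).

Definition opcomp {H : HilbertSpace} (A B : H -> H) : H -> H := fun x => A (B x).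

(* Cartesian decomposition, given the adjoint Astar of A:
   A1 = (A + Astar)/2 ,  A2 = (A - Astar)/(2i) ; note 1/(2i) = -i/2 *)
Definition re_part {H : HilbertSpace} (A Astar : H -> H) : H -> H :=
  fun x => hscal (RtoC (1/2)) (hadd (A x) (Astar x)).
Definition im_part {H : HilbertSpace} (A Astar : H -> H) : H -> H :=
  fun x => hscal (mkC 0 (-(1/2))) (hadd (A x) (hopp (Astar x))).

Definition Dfun {H : HilbertSpace} (A Astar : H -> H) : R :=
  2 * Rmin (opnorm (re_part A Astar) ^ 2) (opnorm (im_part A Astar) ^ 2).

(** The Cartesian parts [A1], [A2] of [A] are self-adjoint with [|<A_j z, z>| <= w(A) ||z||^2],
    hence [||A_j x|| <= w(A) ||x||].  Since [||x||^2 = <A^-1 x, A^* x> <= ||A^-1|| ||x|| ||A^* x||],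
    the hypothesis on [D(A)] says that the smaller part, say [A1], satisfies
    [2 ||A1 x||^2 <= ||A^* x||^2].  The parallelogram identity
    [||A x||^2 + ||A^* x||^2 = 2 ||A1 x||^2 + 2 ||A2 x||^2] then yields
    [||A x||^2 <= 2 ||A2 x||^2 <= 2 w(A)^2 ||x||^2].  Applying this to [A] at [B x] and to
    [B] at [x] gives [|<A B x, x>| <= ||A B x|| <= 2 w(A) w(B)] for unit vectors [x]. *)
From Stdlib Require Import Reals Lra Psatz ClassicalEpsilon Classical.
Open Scope R_scope.

Lemma Cplx_eq (a b : Cplx) : re a = re b -> im a = im b -> a = b.
Proof. destruct a, b; simpl; intros; subst; reflexivity. Qed.

Lemma Cmod_sq (c : Cplx) : Cmod c ^ 2 = re c ^ 2 + im c ^ 2.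
Proof. unfold Cmod. rewrite pow2_sqrt; [reflexivity | nra]. Qed.

Lemma Cmod_ge0 (c : Cplx) : 0 <= Cmod c.
Proof. apply sqrt_pos. Qed.

Lemma Rabs_re_le_Cmod (c : Cplx) : Rabs (re c) <= Cmod c.
Proof.
  unfold Cmod. rewrite <- sqrt_Rsqr_abs. apply sqrt_le_1_alt. unfold Rsqr. nra.
Qed.

Lemma Rabs_im_le_Cmod (c : Cplx) : Rabs (im c) <= Cmod c.
Proof.
  unfold Cmod. rewrite <- sqrt_Rsqr_abs. apply sqrt_le_1_alt. unfold Rsqr. nra.
Qed.

Lemma Cmod_RtoC_mul (b : R) (c : Cplx) : 0 <= b -> Cmod (Cmul (RtoC b) c) = b * Cmod c.
Proof.
  intro b_ge0. unfold Cmod. cbn [re im Cmul RtoC].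
  replace ((b * re c - 0 * im c) ^ 2 + (b * im c + 0 * re c) ^ 2)
    with (b ^ 2 * (re c ^ 2 + im c ^ 2)) by ring.
  rewrite sqrt_mult_alt by apply pow2_ge_0. rewrite sqrt_pow2 by assumption. reflexivity.
Qed.

Lemma sq_le_sq_nonneg (a b : R) : 0 <= a -> 0 <= b -> a ^ 2 <= b ^ 2 -> a <= b.
Proof. intros. nra. Qed.

(* Also valid for [N = 0], where [/ N ^ 2] is the junk value [0]. *)
Lemma mul_le_of_le_inv_sq (c N a b : R) :
  0 <= a -> 0 <= b -> c <= / N ^ 2 -> a <= N ^ 2 * b -> c * a <= b.
Proof.
  intros a_ge0 b_ge0 c_le a_le.
  destruct (Req_dec N 0) as [N0 | N_ne0].
  - subst N. replace (0 ^ 2) with 0 in c_le by ring. rewrite Rinv_0 in c_le. nra.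
  - assert (N2_pos : 0 < N ^ 2) by (rewrite <- Rsqr_pow2; apply Rsqr_pos_lt, N_ne0).
    apply Rle_trans with (/ N ^ 2 * a); [apply Rmult_le_compat_r; lra |].
    apply Rmult_le_reg_l with (N ^ 2); [assumption |].
    rewrite <- Rmult_assoc, Rinv_r by lra. lra.
Qed.

Section InnerProduct.
Context {H : HilbertSpace}.
Implicit Types (x y z u v : H).

Definition sqnorm x : R := re (hinner x x).
Definition rscal (r : R) x : H := hscal (RtoC r) x.

Lemma sqnorm_ge0 x : 0 <= sqnorm x.
Proof. apply hinner_pos. Qed.

Lemma sqnorm_eq0 x : sqnorm x = 0 -> x = hzero.
Proof. apply hinner_def. Qed.

Lemma hnorm_ge0 x : 0 <= hnorm x.
Proof. apply sqrt_pos. Qed.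

Lemma hnorm_sq x : hnorm x ^ 2 = sqnorm x.
Proof. unfold hnorm. rewrite pow2_sqrt; [reflexivity | apply sqnorm_ge0]. Qed.

Lemma hadd_self_eq x : x = hadd x x -> x = hzero.
Proof.
  intro E. rewrite <- (hadd_opp H x). rewrite E at 2.
  rewrite <- hadd_assoc, hadd_opp, hadd_comm, hadd_0. reflexivity.
Qed.

Lemma hscal0 x : hscal C0 x = hzero.
Proof.
  apply hadd_self_eq. rewrite <- hscal_addl. f_equal. apply Cplx_eq; simpl; lra.
Qed.

Lemma hopp_rscal x : hopp x = rscal (-1) x.
Proof.
  assert (E : hadd x (rscal (-1) x) = hzero).
  { unfold rscal. rewrite <- (hscal_1 H x) at 1. rewrite <- hscal_addl, <- (hscal0 x).
    f_equal. apply Cplx_eq; simpl; lra. }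
  rewrite <- (hadd_0 H (rscal (-1) x)), <- (hadd_opp H x), (hadd_comm H x (hopp x)).
  rewrite <- hadd_assoc, E, hadd_comm, hadd_0. reflexivity.
Qed.

Lemma hinner_addr x y z : hinner x (hadd y z) = Cadd (hinner x y) (hinner x z).
Proof.
  rewrite (hinner_sym H (hadd y z) x), hinner_addl, (hinner_sym H x y), (hinner_sym H x z).
  apply Cplx_eq; simpl; lra.
Qed.

Lemma hinner_scalr a x y : hinner x (hscal a y) = Cmul (Cconj a) (hinner x y).
Proof.
  rewrite (hinner_sym H (hscal a y) x), hinner_scall, (hinner_sym H x y).
  apply Cplx_eq; simpl; ring.
Qed.

Lemma hinner0r x : hinner x hzero = C0.
Proof. rewrite <- (hscal0 hzero), hinner_scalr. apply Cplx_eq; simpl; ring. Qed.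

Lemma re_hinner_sym x y : re (hinner y x) = re (hinner x y).
Proof. rewrite hinner_sym. reflexivity. Qed.

Lemma re_hinner_addl u v w : re (hinner (hadd u v) w) = re (hinner u w) + re (hinner v w).
Proof. rewrite hinner_addl. reflexivity. Qed.

Lemma re_hinner_addr u v w : re (hinner w (hadd u v)) = re (hinner w u) + re (hinner w v).
Proof. rewrite hinner_addr. reflexivity. Qed.

Lemma im_hinner_addl u v w : im (hinner (hadd u v) w) = im (hinner u w) + im (hinner v w).
Proof. rewrite hinner_addl. reflexivity. Qed.

Lemma re_hinner_scall c u v :
  re (hinner (hscal c u) v) = re c * re (hinner u v) - im c * im (hinner u v).
Proof. rewrite hinner_scall. reflexivity. Qed.

Lemma re_hinner_rscall r u v : re (hinner (rscal r u) v) = r * re (hinner u v).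
Proof. unfold rscal. rewrite re_hinner_scall. simpl. ring. Qed.

Lemma re_hinner_rscalr r u v : re (hinner u (rscal r v)) = r * re (hinner u v).
Proof. rewrite re_hinner_sym, re_hinner_rscall, re_hinner_sym. reflexivity. Qed.

Lemma im_hinner_rscall r u v : im (hinner (rscal r u) v) = r * im (hinner u v).
Proof. unfold rscal. rewrite hinner_scall. simpl. ring. Qed.

Lemma hinner_rscal_rscal r u v :
  hinner (rscal r u) (rscal r v) = Cmul (RtoC (r ^ 2)) (hinner u v).
Proof. unfold rscal. rewrite hinner_scall, hinner_scalr. apply Cplx_eq; simpl; ring. Qed.

Lemma sqnorm_scal c x : sqnorm (hscal c x) = (re c ^ 2 + im c ^ 2) * sqnorm x.
Proof.
  unfold sqnorm. rewrite hinner_scall, hinner_scalr. simpl.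
  pose proof (f_equal im (hinner_sym H x x)) as im_self. simpl in im_self.
  replace (im (hinner x x)) with 0 by lra. ring.
Qed.

Lemma sqnorm_rscal r x : sqnorm (rscal r x) = r ^ 2 * sqnorm x.
Proof. unfold rscal. rewrite sqnorm_scal. simpl. ring. Qed.

Lemma sqnorm_add u v : sqnorm (hadd u v) = sqnorm u + 2 * re (hinner u v) + sqnorm v.
Proof. unfold sqnorm. rewrite re_hinner_addl, !re_hinner_addr, (re_hinner_sym u v). ring. Qed.

Lemma re_hinner_sq_le x y : re (hinner x y) ^ 2 <= sqnorm x * sqnorm y.
Proof.
  set (r := re (hinner x y)).
  pose proof (sqnorm_ge0 x). pose proof (sqnorm_ge0 y).
  destruct (Req_dec (sqnorm y) 0) as [y0 | y_ne0].
  - apply sqnorm_eq0 in y0. subst r y. rewrite hinner0r. simpl. nra.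
  - (* expand [0 <= ||(|y|^2) x - r y||^2] *)
    pose proof (sqnorm_ge0 (hadd (rscal (sqnorm y) x) (rscal (-r) y))) as P.
    rewrite sqnorm_add, !sqnorm_rscal, re_hinner_rscall, re_hinner_rscalr in P.
    fold r in P. nra.
Qed.

Lemma Cmod_hinner_sq_le x y : Cmod (hinner x y) ^ 2 <= sqnorm x * sqnorm y.
Proof.
  rewrite Cmod_sq. set (c := hinner x y). set (m := re c ^ 2 + im c ^ 2).
  (* apply the real Cauchy-Schwarz inequality to [x] and [c y] *)
  pose proof (re_hinner_sq_le x (hscal c y)) as P.
  rewrite hinner_scalr, sqnorm_scal in P. fold c m in P. simpl in P.
  replace (re c * re c - - im c * im c) with m in P by (unfold m; ring).
  pose proof (sqnorm_ge0 x). pose proof (sqnorm_ge0 y).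
  assert (0 <= m) by (unfold m; nra).
  destruct (Req_dec m 0) as [m0 | m_ne0]; [rewrite m0; nra | nra].
Qed.

Lemma Cmod_hinner_le x y : Cmod (hinner x y) <= hnorm x * hnorm y.
Proof.
  apply sq_le_sq_nonneg.
  - apply Cmod_ge0.
  - apply Rmult_le_pos; apply sqrt_pos.
  - rewrite Rpow_mult_distr, !hnorm_sq. apply Cmod_hinner_sq_le.
Qed.

Lemma hinner_ext u v : (forall z, hinner z u = hinner z v) -> u = v.
Proof.
  intro E. set (d := hadd u (rscal (-1) v)).
  assert (d0 : d = hzero).
  { apply sqnorm_eq0. unfold sqnorm, d at 2. rewrite re_hinner_addr, re_hinner_rscalr, E. ring. }
  assert (V : hadd (rscal (-1) v) v = hzero).
  { rewrite <- hopp_rscal, hadd_comm. apply hadd_opp. }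
  assert (U : u = hadd d v) by (unfold d; rewrite <- hadd_assoc, V, hadd_comm, hadd_0; reflexivity).
  rewrite U, d0, hadd_0. reflexivity.
Qed.

Lemma le_sqnorm_of_unit (f : H -> R) (K : R) :
  (forall r x, f (rscal r x) = r ^ 2 * f x) ->
  (forall x, sqnorm x = 1 -> f x <= K) ->
  forall x, f x <= K * sqnorm x.
Proof.
  intros f_hom f_unit x.
  destruct (Req_dec (sqnorm x) 0) as [x0 | x_ne0].
  - apply sqnorm_eq0 in x0. subst x.
    assert (E : rscal 0 (@hzero H) = hzero) by apply hscal0.
    rewrite <- E at 1. rewrite f_hom, <- E, sqnorm_rscal. lra.
  - pose proof (sqnorm_ge0 x).
    set (s := hnorm x).
    assert (s_sq : s ^ 2 = sqnorm x) by apply hnorm_sq.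
    assert (s_pos : 0 < s).
    { assert (0 <= s) by apply sqrt_pos. destruct (Req_dec s 0); [nra | lra]. }
    specialize (f_unit (rscal (1 / s) x)).
    rewrite f_hom, sqnorm_rscal, <- s_sq in f_unit.
    replace ((1 / s) ^ 2 * s ^ 2) with 1 in f_unit by (field; lra).
    specialize (f_unit eq_refl).
    rewrite <- s_sq.
    replace (f x) with (s ^ 2 * ((1 / s) ^ 2 * f x)) by (field; lra).
    rewrite (Rmult_comm K). apply Rmult_le_compat_l; [nra | assumption].
Qed.

End InnerProduct.

Lemma Rsup_upper_bound (E : R -> Prop) (M : R) :
  (forall r, E r -> r <= M) -> forall r, E r -> r <= Rsup E.
Proof.
  intros E_le r Er.
  assert (E_lub : exists l, is_lub E l).
  { destruct (completeness E) as [l l_lub]; [exists M; exact E_le | eauto | eauto]. }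
  unfold Rsup. destruct excluded_middle_informative as [h | h]; [| exfalso; eauto].
  destruct (constructive_indefinite_description _ h) as [l' l'_lub]. simpl. apply l'_lub, Er.
Qed.

(* [0 <= K] covers the junk value [Rsup E = 0] when [E] has no least upper bound. *)
Lemma Rsup_least (E : R -> Prop) (K : R) :
  (forall r, E r -> r <= K) -> 0 <= K -> Rsup E <= K.
Proof.
  intros E_le K_ge0. unfold Rsup. destruct excluded_middle_informative as [h | h]; [| lra].
  destruct (constructive_indefinite_description _ h) as [l l_lub]. simpl. apply l_lub. exact E_le.
Qed.

Lemma Rsup_ge0 (E : R -> Prop) : (forall r, E r -> 0 <= r) -> 0 <= Rsup E.
Proof.
  intro E_ge0. unfold Rsup. destruct excluded_middle_informative as [h | h]; [| lra].
  destruct (constructive_indefinite_description _ h) as [l [l_ub l_least]]. simpl.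
  destruct (classic (exists r, E r)) as [[r Er] | E_empty].
  - specialize (l_ub r Er). specialize (E_ge0 r Er). lra.
  - assert (l <= l - 1) by (apply l_least; intros r Er; exfalso; eauto). lra.
Qed.

Section Operators.
Context {H : HilbertSpace}.
Implicit Types (T A As Ai : H -> H) (x y z : H).

Lemma linear_rscal T r x : is_linear T -> T (rscal r x) = rscal r (T x).
Proof. intros [_ T_scal]. apply T_scal. Qed.

Lemma numrad_ge0 T : 0 <= numrad T.
Proof. apply Rsup_ge0. intros r [x [_ ->]]. apply Cmod_ge0. Qed.

Lemma sqnorm_le_opnorm T x : is_bounded T -> sqnorm (T x) <= opnorm T ^ 2 * sqnorm x.
Proof.
  intros [T_lin [M T_le]]. revert x.
  apply le_sqnorm_of_unit.
  - intros r x. rewrite linear_rscal, sqnorm_rscal by assumption. reflexivity.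
  - intros x x_unit.
    assert (x_norm : hnorm x = 1) by (unfold hnorm; fold (sqnorm x); rewrite x_unit; apply sqrt_1).
    assert (Tx_le : hnorm (T x) <= opnorm T).
    { apply (Rsup_upper_bound _ (Rabs M)); [| exists x; split; [lra | reflexivity]].
      intros r [y [y_le ->]]. pose proof (T_le y). pose proof (hnorm_ge0 y).
      pose proof (Rle_abs M). pose proof (Rabs_pos M). nra. }
    rewrite <- hnorm_sq. pose proof (hnorm_ge0 (T x)). nra.
Qed.

Lemma Cmod_hinner_le_numrad T z :
  is_bounded T -> Cmod (hinner (T z) z) <= numrad T * sqnorm z.
Proof.
  intros [T_lin [M T_le]]. revert z.
  apply (le_sqnorm_of_unit (fun z => Cmod (hinner (T z) z))).
  - intros r z. rewrite linear_rscal, hinner_rscal_rscal, Cmod_RtoC_mul by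
      (assumption || apply pow2_ge_0). reflexivity.
  - intros z z_unit.
    assert (z_norm : hnorm z = 1) by (unfold hnorm; fold (sqnorm z); rewrite z_unit; apply sqrt_1).
    apply (Rsup_upper_bound _ (Rabs M)); [| exists z; split; [exact z_norm | reflexivity]].
    intros r [y [y_norm ->]]. pose proof (Cmod_hinner_le (T y) y). pose proof (T_le y).
    pose proof (Rle_abs M). rewrite y_norm in *. lra.
Qed.

Lemma adjoint_conj A As x y : is_adjoint A As -> hinner (A x) y = Cconj (hinner (As y) x).
Proof. intro A_adj. rewrite A_adj. apply hinner_sym. Qed.

Lemma adjoint_conj_star A As x y : is_adjoint A As -> hinner (As x) y = Cconj (hinner (A y) x).
Proof.
  intro A_adj. rewrite hinner_sym, <- A_adj, hinner_sym.
  apply Cplx_eq; simpl; ring.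
Qed.

Lemma adjoint_linear A As : is_adjoint A As -> is_linear As.
Proof.
  intro A_adj. split.
  - intros x y. apply hinner_ext. intro z. rewrite <- A_adj, !hinner_addr, <- !A_adj. reflexivity.
  - intros a x. apply hinner_ext. intro z. rewrite <- A_adj, !hinner_scalr, <- A_adj. reflexivity.
Qed.

Lemma sqnorm_le_of_form_bound T (w : R) :
  is_linear T -> 0 <= w ->
  (forall x y, re (hinner (T x) y) = re (hinner (T y) x)) ->
  (forall z, Rabs (re (hinner (T z) z)) <= w * sqnorm z) ->
  forall x, sqnorm (T x) <= w ^ 2 * sqnorm x.
Proof.
  intros T_lin w_ge0 T_sym T_form x.
  assert (form_add : forall u v, re (hinner (T (hadd u v)) (hadd u v)) =
     re (hinner (T u) u) + 2 * re (hinner (T u) v) + re (hinner (T v) v)).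
  { intros u v. destruct T_lin as [T_add _].
    rewrite T_add, re_hinner_addl, !re_hinner_addr, (T_sym v u). ring. }
  (* polarization: [4 Re <T u, v> = Re <T (u + v), u + v> - Re <T (u - v), u - v>] *)
  assert (polar : forall u v, 4 * re (hinner (T u) v) <= 2 * w * (sqnorm u + sqnorm v)).
  { intros u v.
    pose proof (form_add u v) as E1. pose proof (form_add u (rscal (-1) v)) as E2.
    rewrite (linear_rscal T), re_hinner_rscalr, re_hinner_rscall, re_hinner_rscalr in E2
      by assumption.
    pose proof (T_form (hadd u v)) as B1. pose proof (T_form (hadd u (rscal (-1) v))) as B2.
    rewrite sqnorm_add in B1, B2. rewrite re_hinner_rscalr, sqnorm_rscal in B2.
    pose proof (Rle_abs (re (hinner (T (hadd u v)) (hadd u v)))).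
    pose proof (Rle_abs (- re (hinner (T (hadd u (rscal (-1) v))) (hadd u (rscal (-1) v))))).
    rewrite Rabs_Ropp in *. nra. }
  pose proof (sqnorm_ge0 x). pose proof (sqnorm_ge0 (T x)).
  destruct (Req_dec w 0) as [w0 | w_ne0].
  - specialize (polar x (T x)). fold (sqnorm (T x)) in polar. subst w. nra.
  - specialize (polar (rscal w x) (T x)).
    rewrite (linear_rscal T), re_hinner_rscall, sqnorm_rscal in polar by assumption.
    fold (sqnorm (T x)) in polar.
    assert (w * (sqnorm (T x) - w ^ 2 * sqnorm x) <= 0) by nra.
    nra.
Qed.

Lemma sqnorm_le_opnorm_inverse A As Ai x :
  is_adjoint A As -> is_inverse A Ai -> sqnorm x <= opnorm Ai ^ 2 * sqnorm (As x).
Proof.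
  intros A_adj [Ai_bdd [A_Ai _]].
  assert (x_eq : sqnorm x = re (hinner (Ai x) (As x))).
  { unfold sqnorm. rewrite <- A_adj, A_Ai. reflexivity. }
  pose proof (re_hinner_sq_le (Ai x) (As x)) as CS. rewrite <- x_eq in CS.
  pose proof (sqnorm_le_opnorm Ai x Ai_bdd).
  pose proof (sqnorm_ge0 x). pose proof (sqnorm_ge0 (As x)).
  destruct (Req_dec (sqnorm x) 0) as [x0 | x_ne0]; [rewrite x0; nra |].
  assert (sqnorm x * sqnorm x <= sqnorm x * (opnorm Ai ^ 2 * sqnorm (As x))) by nra.
  nra.
Qed.

End Operators.

Section Linearity.
Context {H : HilbertSpace}.
Implicit Types (L : H -> H) (x y : H).

Lemma hadd_addA_comm (a b c d : H) : hadd (hadd a b) (hadd c d) = hadd (hadd a c) (hadd b d).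
Proof. rewrite !hadd_assoc. f_equal. rewrite <- !hadd_assoc. f_equal. apply hadd_comm. Qed.

Lemma hscal_comm a c x : hscal a (hscal c x) = hscal c (hscal a x).
Proof. rewrite !hscal_assoc. f_equal. apply Cplx_eq; simpl; ring. Qed.

Lemma linear_hscal_hadd c (L1 L2 : H -> H) : is_linear L1 -> is_linear L2 ->
  is_linear (fun x => hscal c (hadd (L1 x) (L2 x))).
Proof.
  intros [L1_add L1_scal] [L2_add L2_scal]. split.
  - intros x y. rewrite L1_add, L2_add, <- hscal_addr, hadd_addA_comm. reflexivity.
  - intros a x. rewrite L1_scal, L2_scal, <- hscal_addr, hscal_comm. reflexivity.
Qed.

Lemma linear_hopp L : is_linear L -> is_linear (fun x => hopp (L x)).
Proof.
  intros [L_add L_scal]. split.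
  - intros x y. rewrite L_add, !hopp_rscal. apply hscal_addr.
  - intros a x. rewrite L_scal, !hopp_rscal. apply hscal_comm.
Qed.

Lemma bounded_of_sqnorm_le L (w : R) : is_linear L -> 0 <= w ->
  (forall x, sqnorm (L x) <= w ^ 2 * sqnorm x) -> is_bounded L.
Proof.
  intros L_lin w_ge0 L_le. split; [assumption |]. exists w. intro x.
  apply sq_le_sq_nonneg; [apply hnorm_ge0 | pose proof (hnorm_ge0 x); nra |].
  rewrite Rpow_mult_distr, !hnorm_sq. apply L_le.
Qed.

End Linearity.

Section CartesianDecomposition.
Context {H : HilbertSpace} (A As : H -> H).
Hypotheses (A_bdd : is_bounded A) (A_adj : is_adjoint A As).

Lemma sqnorm_cartesian x :
  sqnorm (A x) + sqnorm (As x) = 2 * sqnorm (re_part A As x) + 2 * sqnorm (im_part A As x).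
Proof.
  unfold re_part, im_part.
  rewrite !sqnorm_scal, hopp_rscal, !sqnorm_add, re_hinner_rscalr, sqnorm_rscal.
  cbn [re im RtoC]. field.
Qed.

Lemma re_hinner_re_part x y :
  re (hinner (re_part A As x) y) = 1 / 2 * (re (hinner (A x) y) + re (hinner (As x) y)).
Proof. unfold re_part. rewrite re_hinner_scall, re_hinner_addl. simpl. ring. Qed.

Lemma re_hinner_im_part x y :
  re (hinner (im_part A As x) y) = 1 / 2 * (im (hinner (A x) y) - im (hinner (As x) y)).
Proof.
  unfold im_part. rewrite re_hinner_scall, hopp_rscal, im_hinner_addl, im_hinner_rscall.
  simpl. ring.
Qed.

Lemma re_part_linear : is_linear (re_part A As).
Proof. apply linear_hscal_hadd; [apply A_bdd | exact (adjoint_linear A As A_adj)]. Qed.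

Lemma im_part_linear : is_linear (im_part A As).
Proof.
  apply linear_hscal_hadd; [apply A_bdd |]. apply linear_hopp, (adjoint_linear A As A_adj).
Qed.

Lemma re_part_sqnorm_le x : sqnorm (re_part A As x) <= numrad A ^ 2 * sqnorm x.
Proof.
  apply sqnorm_le_of_form_bound; [apply re_part_linear | apply numrad_ge0 | |].
  - intros u v. rewrite !re_hinner_re_part.
    rewrite (adjoint_conj A As u v A_adj), (adjoint_conj_star A As u v A_adj). simpl. ring.
  - intro z. rewrite re_hinner_re_part, (adjoint_conj_star A As z z A_adj). simpl.
    replace (1 / 2 * (re (hinner (A z) z) + re (hinner (A z) z))) with (re (hinner (A z) z))
      by field.
    eapply Rle_trans; [apply Rabs_re_le_Cmod | apply Cmod_hinner_le_numrad, A_bdd].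
Qed.

Lemma im_part_sqnorm_le x : sqnorm (im_part A As x) <= numrad A ^ 2 * sqnorm x.
Proof.
  apply sqnorm_le_of_form_bound; [apply im_part_linear | apply numrad_ge0 | |].
  - intros u v. rewrite !re_hinner_im_part.
    rewrite (adjoint_conj A As u v A_adj), (adjoint_conj_star A As u v A_adj). simpl. ring.
  - intro z. rewrite re_hinner_im_part, (adjoint_conj_star A As z z A_adj). simpl.
    replace (1 / 2 * (im (hinner (A z) z) - - im (hinner (A z) z))) with (im (hinner (A z) z))
      by field.
    eapply Rle_trans; [apply Rabs_im_le_Cmod | apply Cmod_hinner_le_numrad, A_bdd].
Qed.

Lemma re_part_bounded : is_bounded (re_part A As).
Proof.
  apply (bounded_of_sqnorm_le _ (numrad A));
    [apply re_part_linear | apply numrad_ge0 | apply re_part_sqnorm_le].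
Qed.

Lemma im_part_bounded : is_bounded (im_part A As).
Proof.
  apply (bounded_of_sqnorm_le _ (numrad A));
    [apply im_part_linear | apply numrad_ge0 | apply im_part_sqnorm_le].
Qed.

Lemma sqnorm_le_of_small_part (Ai T1 T2 : H -> H) (x : H) :
  is_inverse A Ai -> is_bounded T1 ->
  sqnorm (A x) + sqnorm (As x) = 2 * sqnorm (T1 x) + 2 * sqnorm (T2 x) ->
  2 * opnorm T1 ^ 2 <= / opnorm Ai ^ 2 ->
  sqnorm (A x) <= 2 * sqnorm (T2 x).
Proof.
  intros A_inv T1_bdd parts T1_small.
  pose proof (sqnorm_le_opnorm T1 x T1_bdd).
  pose proof (mul_le_of_le_inv_sq _ _ _ _ (sqnorm_ge0 x) (sqnorm_ge0 (As x)) T1_small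
    (sqnorm_le_opnorm_inverse A As Ai x A_adj A_inv)).
  lra.
Qed.

Lemma sqnorm_le_two_numrad_sq (Ai : H -> H) :
  is_inverse A Ai -> Dfun A As <= / opnorm Ai ^ 2 ->
  forall x, sqnorm (A x) <= 2 * numrad A ^ 2 * sqnorm x.
Proof.
  intros A_inv D_le x.
  pose proof (re_part_sqnorm_le x). pose proof (im_part_sqnorm_le x).
  pose proof (sqnorm_cartesian x).
  unfold Dfun, Rmin in D_le. destruct Rle_dec.
  - pose proof (sqnorm_le_of_small_part Ai (re_part A As) (im_part A As) x
      A_inv re_part_bounded ltac:(lra) ltac:(lra)).
    lra.
  - pose proof (sqnorm_le_of_small_part Ai (im_part A As) (re_part A As) x
      A_inv im_part_bounded ltac:(lra) ltac:(lra)).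
    lra.
Qed.

End CartesianDecomposition.

Theorem corollary2p3 (H : HilbertSpace) (A B Astar Bstar Ainv Binv : H -> H) :
  is_bounded A -> is_bounded B ->
  is_adjoint A Astar -> is_adjoint B Bstar ->
  is_inverse A Ainv -> is_inverse B Binv ->
  Dfun A Astar <= / (opnorm Ainv ^ 2) ->
  Dfun B Bstar <= / (opnorm Binv ^ 2) ->
  numrad (opcomp A B) <= 2 * numrad A * numrad B.
Proof.
  intros A_bdd B_bdd A_adj B_adj A_inv B_inv A_D B_D.
  pose proof (numrad_ge0 A). pose proof (numrad_ge0 B).
  apply Rsup_least; [| nra].
  intros r [x [x_unit ->]].
  assert (x_sq : sqnorm x = 1) by (rewrite <- hnorm_sq, x_unit; ring).
  pose proof (sqnorm_le_two_numrad_sq A Astar A_bdd A_adj Ainv A_inv A_D (B x)).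
  pose proof (sqnorm_le_two_numrad_sq B Bstar B_bdd B_adj Binv B_inv B_D x).
  pose proof (Cmod_hinner_sq_le (A (B x)) x).
  pose proof (sqnorm_ge0 (B x)).
  unfold opcomp. rewrite x_sq in *.
  apply sq_le_sq_nonneg; [apply Cmod_ge0 | nra | nra].
Qed.
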